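(* Let $X$ be a real random variable with density $p$, $\mathbb{E}X=0$, $\mathrm{Var}(X)=1$, $\mathbb{E}|X|^s<\infty$ for some $s>2$, and suppose $\|p-\phi\|_2\le1$. Then there exist $C_1,C_2>0$ such that \[ D(X)\le (C_1+\|p-\phi\|_\infty)\big(\|p-\phi\|_1+\|p-\phi\|_2\big)+C_2(\mathbb{E}|X|^s)^{2/s}\big(\|p-\phi\|_1+\|p-\phi\|_2\big)^{1-2/s}. \]
   Context: $\phi(x)=(2\pi)^{-1/2}e^{-x^2/2}$. $D(X)$ denotes the Kullback–Leibler divergence of $X$ from a Gaussian with the same mean and variance as $X$; here $D(X)=\int p\ln(p/\phi)$. $\|\cdot\|_q$ is the $L^q(\mathbb{R})$ norm. *)

From HB Require Import structures.
From mathcomp Require Import all_boot all_order all_algebra.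
From mathcomp Require Import all_classical all_reals all_analysis.
Set Implicit Arguments. Unset Strict Implicit. Unset Printing Implicit Defensive.
Import Order.TTheory GRing.Theory Num.Theory.
Local Open Scope ring_scope.

Definition phi {R : realType} (x : R) : R :=
  (Num.sqrt (pi *+ 2))^-1 * expR (- (x ^+ 2) / 2).

Notation leb R := (@lebesgue_measure R).

Definition Lqnorm {R : realType} (q : \bar R) (f : R -> R) : \bar R :=
  Lnorm (leb R) q (fun x => (f x)%:E).

Definition is_density {R : realType} (p : R -> R) : Prop :=
  measurable_fun [set: R] p /\ (forall x, 0 <= p x) /\
  (\int[leb R]_x (p x)%:E = 1)%E.

(* D(X) = \int p ln(p/phi)  (with 0 ln 0 = 0, which holds since ln 0 = 0) *)
Definition KLgauss {R : realType} (p : R -> R) : \bar R :=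
  (\int[leb R]_x (p x * ln (p x / phi x))%:E)%E.

From HB Require Import structures.
From mathcomp Require Import all_boot all_order all_algebra.
From mathcomp Require Import all_classical all_reals all_analysis.
From mathcomp Require Import lra measurable_realfun.
Import Order.TTheory GRing.Theory Num.Theory.
Local Open Scope ring_scope.

(* With D := p - phi and D+ := max(D, 0), the elementary bound
   P ln(P/F) <= |P - F| + (P - F)^2 - ln F (P - F)+   (P >= 0, 0 < F <= 1)
   and -ln phi(x) = ln sqrt(2 pi) + x^2/2 give pointwise
   p ln(p/phi) <= (1 + ln sqrt(2 pi)) |D| + D^2 + x^2 D+.
   The first term integrates to a multiple of ||D||_1, the second to
   ||D||_2^2 <= ||D||_2.  Writing x^2 D+ = (x^2 D+^(2/s)) D+^(1 - 2/s), Hoelder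
   with exponents s/2 and s/(s-2) bounds the last integral by
   (\int |x|^s D+)^(2/s) (\int D+)^(1-2/s) <= (E|X|^s)^(2/s) ||D||_1^(1-2/s).
   Hence C1 = 1 + ln sqrt(2 pi) and C2 = 1 work. *)

Lemma mul_ln_div_le {R : realType} (P F : R) : 0 <= P -> 0 < F -> F <= 1 ->
  P * ln (P / F) <= `|P - F| + (P - F) ^+ 2 - ln F * Num.max (P - F) 0.
Proof.
move=> P0 F0 F1; have lnF0 := ln_le0 F1.
have [PF|FP] := leP P F.
  have -> : Num.max (P - F) 0 = 0 by apply/max_idPr; lra.
  have lhs0 : P * ln (P / F) <= 0.
    have [->|P_neq0] := eqVneq P 0; first by rewrite mul0r.
    by rewrite mulr_ge0_le0 // ln_le0 // ler_pdivrMr // mul1r.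
  have := sqr_ge0 (P - F); have := normr_ge0 (P - F); rewrite mulr0; lra.
have P_gt0 : 0 < P by apply: lt_trans FP.
rewrite gtr0_norm ?subr_gt0 // (_ : Num.max (P - F) 0 = P - F); last first.
  by apply/max_idPl; lra.
have lnPF : ln (P / F) = ln P - ln F by rewrite ln_div ?posrE.
have lnP : ln P <= P - F.
  by have := @le_ln1Dx R (P - 1) ltac:(lra); rewrite addrC subrK; lra.
have FlnPF : F * ln (P / F) <= P - F.
  have := @le_ln1Dx R (P / F - 1) ltac:(have := divr_gt0 P_gt0 F0; lra).
  rewrite addrC subrK => /(ler_wpM2l (ltW F0)).
  by rewrite mulrBr mulrCA divff ?gt_eqF // !mulr1.
have PFlnP : (P - F) * ln P <= (P - F) * (P - F) by apply: ler_wpM2l; lra.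
rewrite lnPF in FlnPF *; rewrite expr2; nra.
Qed.

Definition ln_sqrt2pi {R : realType} : R := ln (Num.sqrt (pi *+ 2)).

Lemma sqrt2pi_ge1 {R : realType} : 1 <= Num.sqrt (pi *+ 2 : R).
Proof. by rewrite -sqrtr1 ler_sqrt mulr2n; have := pi_ge2 R; lra. Qed.

Lemma sqrt2pi_gt0 {R : realType} : 0 < Num.sqrt (pi *+ 2 : R).
Proof. exact: lt_le_trans sqrt2pi_ge1. Qed.

Lemma ln_sqrt2pi_ge0 {R : realType} : 0 <= @ln_sqrt2pi R.
Proof. exact/ln_ge0/sqrt2pi_ge1. Qed.

Lemma phi_gt0 {R : realType} (x : R) : 0 < phi x.
Proof. by rewrite /phi mulr_gt0 ?expR_gt0 ?invr_gt0 ?sqrt2pi_gt0. Qed.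

Lemma phi_le1 {R : realType} (x : R) : phi x <= 1.
Proof.
rewrite /phi -[1]mulr1 ler_pM ?invr_ge0 ?expR_ge0 ?(ltW sqrt2pi_gt0) //.
  by rewrite invr_le1 ?sqrt2pi_ge1 ?unitfE ?gt_eqF ?sqrt2pi_gt0.
by rewrite expR_le1 mulNr oppr_le0 divr_ge0 ?sqr_ge0.
Qed.

Lemma ln_phi {R : realType} (x : R) : ln (phi x) = - ln_sqrt2pi - x ^+ 2 / 2.
Proof.
rewrite /phi lnM ?posrE ?invr_gt0 ?expR_gt0 ?sqrt2pi_gt0 //.
by rewrite lnV ?posrE ?sqrt2pi_gt0 // expRK mulNr.
Qed.

Lemma measurable_phi {R : realType} : measurable_fun [set: R] phi.
Proof.
apply: measurable_funM; first exact: measurable_cst.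
apply: measurableT_comp; first exact: measurable_expR.
apply: measurable_funM; last exact: measurable_cst.
exact: (measurable_funN (exprn_measurable 2)).
Qed.

Lemma measurable_phiV {R : realType} : measurable_fun [set: R] (fun x => (phi x)^-1).
Proof.
have -> : (fun x : R => (phi x)^-1) = fun x => Num.sqrt (pi *+ 2) * expR (x ^+ 2 / 2).
  by apply: funext => x; rewrite /phi invfM invrK -expRN mulNr opprK.
apply: measurable_funM; first exact: measurable_cst.
apply: measurableT_comp; first exact: measurable_expR.
exact: measurable_funM (exprn_measurable 2) (measurable_cst _).
Qed.

Lemma mul_ln_div_phi_le {R : realType} (P x : R) : 0 <= P ->
  P * ln (P / phi x) <= (1 + ln_sqrt2pi) * `|P - phi x| + (P - phi x) ^+ 2
                        + x ^+ 2 * Num.max (P - phi x) 0.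
Proof.
move=> P0; apply: le_trans (mul_ln_div_le _ _ P0 (phi_gt0 x) (phi_le1 x)) _.
rewrite ln_phi; set m := Num.max _ _.
have m0 : 0 <= m by rewrite le_max lexx orbT.
have m_le : m <= `|P - phi x| by rewrite ge_max ler_norm normr_ge0.
have := @ln_sqrt2pi_ge0 R; have := sqr_ge0 x; nra.
Qed.

Section integral_inequalities.
Context {d} {T : measurableType d} {R : realType} (mu : {measure set T -> \bar R}).
Local Open Scope ereal_scope.

Lemma le_ge0_integral (f g : T -> \bar R) :
  measurable_fun [set: T] f -> measurable_fun [set: T] g ->
  (forall x, 0 <= g x) -> (forall x, f x <= g x) ->
  \int[mu]_x f x <= \int[mu]_x g x.
Proof.
move=> mf mg g0 fg; rewrite integralE.
apply: (@le_trans _ _ (\int[mu]_x f^\+ x)).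
  rewrite -[X in _ <= X]sube0; apply: leeB => //.
  by apply: integral_ge0 => x _; exact: funeneg_ge0.
apply: ge0_le_integral => //; first exact: measurable_funepos.
by move=> x _; rewrite funeposE ge_max fg g0.
Qed.

Lemma hoelder_interpolation (w h : T -> R) (a : R) :
  measurable_fun [set: T] w -> measurable_fun [set: T] h ->
  (forall x, 0 <= w x)%R -> (forall x, 0 <= h x)%R -> (0 < a < 1)%R ->
  \int[mu]_x (w x * h x)%:E <=
  (\int[mu]_x (w x `^ a^-1 * h x)%:E) `^ a * (\int[mu]_x (h x)%:E) `^ (1 - a).
Proof.
move=> mw mh w0 h0 /andP[a0 a1].
have b0 : (0 < 1 - a)%R by rewrite subr_gt0.
pose f x := (w x * h x `^ a)%R; pose g x := (h x `^ (1 - a))%R.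
have mf : measurable_fun [set: T] f.
  exact: measurable_funM mw (measurableT_comp (measurable_powR a) mh).
have mg : measurable_fun [set: T] g := measurableT_comp (measurable_powR _) mh.
have fgE : Lnorm mu 1 (EFin \o (f \* g)%R) = \int[mu]_x (w x * h x)%:E.
  rewrite Lnorm1; apply: eq_integral => x _; rewrite /= /f /g.
  rewrite -mulrA -powRD; last by rewrite addrC subrK oner_eq0.
  by rewrite addrC subrK powRr1 // ger0_norm ?mulr_ge0.
have fE : Lnorm mu a^-1%:E (EFin \o f) = (\int[mu]_x (w x `^ a^-1 * h x)%:E) `^ a.
  rewrite unlock invrK; congr (_ `^ _); apply: eq_integral => x _.
  rewrite /= ger0_norm ?mulr_ge0 ?powR_ge0 //.
  by rewrite powRM ?powR_ge0 // -powRrM mulfV ?gt_eqF // powRr1.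
have gE : Lnorm mu (1 - a)^-1%:E (EFin \o g) = (\int[mu]_x (h x)%:E) `^ (1 - a).
  rewrite unlock invrK; congr (_ `^ _); apply: eq_integral => x _.
  by rewrite /= ger0_norm ?powR_ge0 // -powRrM mulfV ?gt_eqF // powRr1.
rewrite -fgE -fE -gE; apply: hoelder => //; rewrite ?invr_gt0 //.
by rewrite !invrK addrC subrK.
Qed.

Lemma integral_sqr_le_Lnorm2 (f : T -> R) :
  Lnorm mu 2%:E (fun x => (f x)%:E) <= 1 ->
  \int[mu]_x (f x ^+ 2)%:E <= Lnorm mu 2%:E (fun x => (f x)%:E).
Proof.
have -> : \int[mu]_x (f x ^+ 2)%:E = Lnorm mu 2%:E (fun x => (f x)%:E) `^ 2.
  rewrite poweR_Lnorm //; apply: eq_integral => x _.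
  by rewrite abse_EFin poweR_EFin powR_mulrn ?real_normK ?num_real.
move: (Lnorm_ge0 mu 2%:E (fun x => (f x)%:E)).
case: (Lnorm _ _ _) => [r| |] //=; rewrite !lee_fin => r0 r1.
by rewrite powR_mulrn // expr2; nra.
Qed.

End integral_inequalities.

Section relative_entropy_gaussian.
Context {R : realType} {p : R -> R}.
Hypotheses (mp : measurable_fun [set: R] p) (p_ge0 : forall x, 0 <= p x).

Let md : measurable_fun [set: R] (p \- phi) := measurable_funB mp measurable_phi.

Let mdp : measurable_fun [set: R] (fun x => Num.max (p x - phi x) 0).
Proof. exact: measurable_maxr md (measurable_cst _). Qed.

Let m_abs : measurable_fun [set: R] (fun x => `|p x - phi x|).
Proof. by apply: measurableT_comp; [exact: normr_measurable | exact: md]. Qed.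

Let max_ge0 x : 0 <= Num.max (p x - phi x) 0.
Proof. by rewrite le_max lexx orbT. Qed.

Lemma KLgauss_le :
  (KLgauss p <= (1 + ln_sqrt2pi)%:E * Lqnorm 1%:E (p \- phi)%R
     + \int[leb R]_x ((p x - phi x) ^+ 2)%R%:E
     + \int[leb R]_x (x ^+ 2 * Num.max (p x - phi x) 0)%R%:E)%E.
Proof.
have c_ge0 : 0 <= 1 + @ln_sqrt2pi R by have := @ln_sqrt2pi_ge0 R; lra.
have m_mom : measurable_fun [set: R] (fun x => x ^+ 2 * Num.max (p x - phi x) 0).
  exact: measurable_funM (exprn_measurable 2) mdp.
have m_sqr : measurable_fun [set: R] (fun x => (p x - phi x) ^+ 2).
  exact: measurable_funX md.
pose g x := (1 + ln_sqrt2pi) * `|p x - phi x| + (p x - phi x) ^+ 2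
             + x ^+ 2 * Num.max (p x - phi x) 0.
have g_ge0 x : 0 <= g x.
  have := max_ge0 x; have := normr_ge0 (p x - phi x).
  by have := sqr_ge0 (p x - phi x); have := sqr_ge0 x; rewrite /g; nra.
apply: (@le_trans _ _ (\int[leb R]_x (g x)%:E)%E).
  apply: le_ge0_integral => [||x|x]; rewrite ?lee_fin ?mul_ln_div_phi_le //.
  - apply/measurable_EFinP/measurable_funM => //.
    apply: measurableT_comp; first exact: measurable_ln.
    exact: measurable_funM mp measurable_phiV.
  - apply/measurable_EFinP/measurable_funD => //.
    exact: measurable_funD (measurable_funM (measurable_cst _) m_abs) m_sqr.
under eq_integral do rewrite /g EFinD.
rewrite ge0_integralD //; first last.
- exact/measurable_EFinP.
- by move=> x _; rewrite lee_fin mulr_ge0 ?sqr_ge0 ?max_ge0.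
- apply/measurable_EFinP/measurable_funD => //.
  exact: measurable_funM (measurable_cst _) m_abs.
- move=> x _; rewrite lee_fin.
  exact: addr_ge0 (mulr_ge0 c_ge0 (normr_ge0 _)) (sqr_ge0 _).
under eq_integral do rewrite EFinD.
rewrite ge0_integralD //; first last.
- exact/measurable_EFinP.
- by move=> x _; rewrite lee_fin sqr_ge0.
- by apply/measurable_EFinP; apply: measurable_funM.
- by move=> x _; rewrite lee_fin mulr_ge0 ?max_ge0.
under eq_integral do rewrite EFinM.
rewrite ge0_integralZl //; last exact/measurable_EFinP.
by rewrite /Lqnorm Lnorm1.
Qed.

Lemma integral_sqr_mul_max_le (s : R) : 2 < s ->
  (\int[leb R]_x (x ^+ 2 * Num.max (p x - phi x) 0)%R%:E <=
   (\int[leb R]_x (`|x| `^ s * p x)%R%:E) `^ (2 / s)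
   * Lqnorm 1%:E (p \- phi)%R `^ (1 - 2 / s))%E.
Proof.
move=> s_gt2.
have s_gt0 : 0 < s by apply: lt_trans s_gt2.
have a01 : 0 < 2 / s < 1.
  by rewrite divr_gt0 //= ltr_pdivrMr // mul1r.
apply: le_trans (hoelder_interpolation (leb R) (fun x => x ^+ 2) _ _
  (exprn_measurable 2) mdp (fun x => sqr_ge0 x) max_ge0 a01) _.
have in_ge0 (y : \bar R) : (0 <= y)%E -> y \in `[0%E, +oo%E].
  by rewrite in_itv /= leey andbT.
apply: lee_pmul; rewrite ?poweR_ge0 //.
- apply: gt0_ler_poweR; rewrite ?divr_ge0 ?(ltW s_gt0) ?in_ge0 //.
  + by apply: integral_ge0 => x _; rewrite lee_fin mulr_ge0 ?powR_ge0.
  + by apply: integral_ge0 => x _; rewrite lee_fin mulr_ge0 ?powR_ge0.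
  apply: ge0_le_integral => //.
  + by move=> x _; rewrite lee_fin mulr_ge0 ?powR_ge0.
  + apply/measurable_EFinP/measurable_funM => //.
    exact: measurableT_comp (measurable_powR _) (exprn_measurable 2).
  + apply/measurable_EFinP/measurable_funM => //.
    by apply: measurableT_comp (measurable_powR _) _; exact: normr_measurable.
  move=> x _; rewrite lee_fin invf_div -real_normK ?num_real // -powR_mulrn //.
  rewrite -powRrM [2 * _]mulrC divfK ?pnatr_eq0 //.
  apply: ler_wpM2l; first exact: powR_ge0.
  by rewrite ge_max p_ge0 andbT lerBlDr lerDl ltW ?phi_gt0.
- have a_le1 : 2 / s <= 1 by case/andP: a01 => _ /ltW.
  apply: gt0_ler_poweR; rewrite ?subr_ge0 ?a_le1 ?in_ge0 //.
  + by apply: integral_ge0 => x _; rewrite lee_fin.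
  + exact: Lnorm_ge0.
  rewrite /Lqnorm Lnorm1; apply: ge0_le_integral => //.
  + by move=> x _; rewrite lee_fin.
  + exact/measurable_EFinP.
  + apply/measurable_EFinP/measurableT_comp => //; exact: normr_measurable.
  by move=> x _; rewrite lee_fin ge_max normr_ge0 ler_norm.
Qed.

End relative_entropy_gaussian.

Theorem corollary2p3 (R : realType) (s : R) (hs : 2 < s) :
  exists C1 C2 : R, 0 < C1 /\ 0 < C2 /\
  forall p : R -> R,
    is_density p ->
    (leb R).-integrable [set: R] (fun x => (x * p x)%R%:E) ->
    (\int[leb R]_x (x * p x)%R%:E = 0)%E ->
    (\int[leb R]_x (x ^+ 2 * p x)%R%:E = 1)%E ->
    (\int[leb R]_x ((`|x| `^ s) * p x)%R%:E < +oo)%E ->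
    (Lqnorm 2%:E (p \- phi)%R <= 1)%E ->
    let N12 := (Lqnorm 1%:E (p \- phi)%R + Lqnorm 2%:E (p \- phi)%R)%E in
    let Ms := fine (\int[leb R]_x ((`|x| `^ s) * p x)%R%:E) in
    (KLgauss p <=
       (C1%:E + Lqnorm +oo%E (p \- phi)%R) * N12
       + C2%:E * (Ms `^ (2 / s))%R%:E * (N12 `^ (1 - 2 / s)%R))%E.
Proof.
have c_gt0 : 0 < 1 + @ln_sqrt2pi R by have := @ln_sqrt2pi_ge0 R; lra.
exists (1 + ln_sqrt2pi), 1; do 2!split => //.
move=> p [mp [p_ge0 _]] _ _ _ moment_fin N2_le1; cbv zeta.
set N12 := (Lqnorm 1%:E _ + Lqnorm 2%:E _)%E.
set Ms := fine (\int[leb R]_x (`|x| `^ s * p x)%:E)%E.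
have [n1_ge0 n2_ge0 ni_ge0] : [/\ 0 <= Lqnorm 1%:E (p \- phi)%R,
    0 <= Lqnorm 2%:E (p \- phi)%R & 0 <= Lqnorm +oo (p \- phi)%R]%E.
  by split; apply: Lnorm_ge0.
have MsE : (\int[leb R]_x (`|x| `^ s * p x)%:E = Ms%:E)%E.
  rewrite /Ms fineK // ge0_fin_numE //.
  by apply: integral_ge0 => x _; rewrite lee_fin mulr_ge0 ?powR_ge0.
apply: le_trans (KLgauss_le mp p_ge0) _; apply: leeD.
  apply: (@le_trans _ _ ((1 + ln_sqrt2pi)%:E * N12)%E).
    rewrite ge0_muleDr //; apply: leeD => //.
    apply: le_trans (integral_sqr_le_Lnorm2 _ _ N2_le1) _.
    by rewrite lee_pemull // lee_fin lerDl ln_sqrt2pi_ge0.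
  by rewrite lee_wpmul2r ?adde_ge0 // leeDl.
apply: le_trans (integral_sqr_mul_max_le mp p_ge0 s hs) _.
rewrite MsE poweR_EFin mul1e lee_wpmul2l ?lee_fin ?powR_ge0 //.
apply: gt0_ler_poweR; rewrite ?in_itv /= ?leey ?andbT ?adde_ge0 ?leeDl //.
by rewrite subr_ge0 ler_pdivrMr ?mul1r; lra.
Qed.
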